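(* Let $S$ be a simple $(l,r)$-framed algebra, $C_S=\{\alpha\in\mathbb{Z}_2^{l+r}:S_{(0,\alpha)}\ne0\}$ (a subgroup), and let $\varepsilon:C_S\times C_S\to\{\pm1\}$ be a bimultiplicative map with $\varepsilon(\alpha,\alpha)=(-1)^{|\alpha|/2}$ and $\varepsilon(\alpha,\beta)\varepsilon(\beta,\alpha)=(-1)^{|\alpha\beta|}$ for all $\alpha,\beta\in C_S$. Let $\mathbb{C}[\hat C_S]$ be the algebra with basis $\{e_\alpha\}_{\alpha\in C_S}$ and product $e_\alpha e_\beta=\varepsilon(\alpha,\beta)e_{\alpha+\beta}$, graded by putting $e_\alpha$ in degree $(0,\alpha)$. Then there is a grading-preserving $\mathbb{C}$-algebra isomorphism between $A_S(0)=\bigoplus_{\alpha\in C_S}S_{(0,\alpha)}$ (with the product of $S$) and $\mathbb{C}[\hat C_S]$.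
   Context: Let $\mathrm{IS}=\{0,\frac12,\frac1{16}\}$ with fusion rule $\star$ (values are subsets): $0\star h=h\star0=\{h\}$, $\frac12\star\frac12=\{0\}$, $\frac12\star\frac1{16}=\frac1{16}\star\frac12=\{\frac1{16}\}$, $\frac1{16}\star\frac1{16}=\{0,\frac12\}$; $A(h_0,h_1,h_2,h_3)=\{h: h\in h_2\star h_3,\ h_0\in h_1\star h\}$. For $h\in A(h_0,h_1,h_2,h_3)$, $h'\in A(h_0,h_2,h_1,h_3)$ define $B^{h,h'}_{h_0,h_1,h_2,h_3}$: $B_{*,0,*,*}=B_{*,*,0,*}=1$; $B_{*,\frac12,\frac12,*}=-1$; $B_{a,\frac12,\frac1{16},a'}=B_{a,\frac1{16},\frac12,a'}=i$ if $a$ or $a'$ is $\frac12$, else $-i$; $B^{b,b'}_{a,\frac1{16},\frac1{16},a'}=e^{-\pi i/8}\cdot\{1$ if $a,a'\ne\frac1{16},a=a'$; $i$ if $a,a'\neq\frac1{16},a\ne a'$; $\frac{1+i}2$ if $a=a'=\frac1{16},b=b'$; $\frac{1-i}2$ if $a=a'=\frac1{16},b\neq b'\}$. $\mathrm{IS}^{(l,r)}=\mathrm{IS}^l\times\mathrm{IS}^r$, $\lambda=(h_1,..,h_l,\bar h_1,..,\bar h_r)$, $s(\lambda)=\sum h_i-\sum\bar h_j$; $\star$, $A$ componentwise; $B^{\lambda,\lambda'}_{\lambda^0,\dots,\lambda^3}=\prod_{i\le l}B^{h_i,h'_i}_{h^0_i,\dots,h^3_i}\prod_{j\le r}\overline{B^{\bar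 h_j,\bar h'_j}_{\bar h^0_j,\dots,\bar h^3_j}}$. An $(l,r)$-framed algebra: finite-dimensional $\mathrm{IS}^{(l,r)}$-graded $S=\bigoplus S_\lambda$ over $\mathbb{C}$ with bilinear product, nonzero $1\in S_0$, $a\cdot_\lambda b$ the $S_\lambda$-component of $a\cdot b$, satisfying (FA1) $S_\lambda=0$ unless $s(\lambda)\in\mathbb{Z}$; (FA2) $S_0=\mathbb{C}1$, $1$ a two-sided unit; (FA3) $S_{\lambda^1}\cdot S_{\lambda^2}\subset\bigoplus_{\lambda\in\lambda^1\star\lambda^2}S_\lambda$; (FA4) $a_2\cdot_{\lambda^0}(a_1\cdot_{\lambda'}a_3)=\sum_{\lambda\in A(\lambda^0,\lambda^1,\lambda^2,\lambda^3)}B^{\lambda,\lambda'}_{\lambda^0,\lambda^1,\lambda^2,\lambda^3}a_1\cdot_{\lambda^0}(a_2\cdot_\lambda a_3)$ for $a_i\in S_{\lambda^i}$, $\lambda'\in A(\lambda^0,\lambda^2,\lambda^1,\lambda^3)$. Ideal: graded subspace $M$ with $S\cdot M\subset M$; simple: only ideals $0$ and $S$. Identify $\mathrm{IS}$ with $\{(d,c)\in\mathbb{Z}_2^2:dc=0\}$ via $0\leftrightarrow(0,0)$, $\frac12\leftrightarrow(0,1)$, $\frac1{16}\leftrightarrow(1,0)$, and componentwise $\mathrm{IS}^{(l,r)}$ with pairs $(d,c)\in(\mathbb{Z}_2^{l+r})^2$, $dc=0$. For $c\in\mathbb{Z}_2^{l+r}$, $|c|=|c|_l-|c|_r$ where $|c|_l,|c|_r$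 count ones in the first $l$ and last $r$ coordinates; products of codewords are componentwise. *)

From HB Require Import structures.
From mathcomp Require Import all_boot all_order all_algebra.
From mathcomp Require Import reals trigo.
From mathcomp.real_closed Require Import complex.

Set Implicit Arguments.
Unset Strict Implicit.
Unset Printing Implicit Defensive.

Import Order.TTheory GRing.Theory Num.Theory.
Local Open Scope ring_scope.

Inductive IS := H0 | Hhalf | H16.

Definition IS_to_ord (h : IS) : 'I_3 :=
  match h with H0 => inord 0 | Hhalf => inord 1 | H16 => inord 2 end.
Definition IS_of_ord (i : 'I_3) : IS :=
  match val i with 0 => H0 | 1 => Hhalf | _ => H16 end.
Lemma IS_ordK : cancel IS_to_ord IS_of_ord.
Proof. by case; rewrite /IS_of_ord /= inordK. Qed.

HB.instance Definition _ := Equality.copy IS (can_type IS_ordK).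
HB.instance Definition _ := Choice.copy IS (can_type IS_ordK).
HB.instance Definition _ := Countable.copy IS (can_type IS_ordK).
HB.instance Definition _ := Finite.copy IS (can_type IS_ordK).

Definition hval (h : IS) : rat :=
  match h with H0 => 0 | Hhalf => 1 / 2%:R | H16 => 1 / 16%:R end.

(* fusion rule: [star h1 h2 h] means  h \in h1 * h2 *)
Definition star (h1 h2 h : IS) : bool :=
  match h1, h2 with
  | H0, _ => h == h2
  | _, H0 => h == h1
  | Hhalf, Hhalf => h == H0
  | Hhalf, H16 | H16, Hhalf => h == H16
  | H16, H16 => (h == H0) || (h == Hhalf)
  end.

Definition Amem (h0 h1 h2 h3 h : IS) : bool := star h2 h3 h && star h1 h h0.

Section Complex.
Variable R : realType.
Local Notation C := R[i].

Definition zeta16 : C := ((cos (pi / 8%:R : R)) -i* (sin (pi / 8%:R : R)))%C.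

Definition iC : C := 'i%C.

(* B^{b,b'}_{a,h1,h2,a'}  (only meaningful for b in A(a,h1,h2,a'),
   b' in A(a,h2,h1,a'); the value 0 is a never-used default) *)
Definition Bfun (b b' a h1 h2 a' : IS) : C :=
  match h1, h2 with
  | H0, _ | _, H0 => 1
  | Hhalf, Hhalf => -1
  | Hhalf, H16 | H16, Hhalf =>
      if (a == Hhalf) || (a' == Hhalf) then iC else - iC
  | H16, H16 =>
      zeta16 *
      (if (a != H16) && (a' != H16) then (if a == a' then 1 else iC)
       else if (a == H16) && (a' == H16) then
              (if b == b' then (1 + iC) / 2%:R else (1 - iC) / 2%:R)
       else 0)
  end.
End Complex.

Definition Lambda (l r : nat) := ({ffun 'I_l -> IS} * {ffun 'I_r -> IS})%type.

Definition lam0 {l r : nat} : Lambda l r := ([ffun => H0], [ffun => H0]).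

Definition sL {l r : nat} (lam : Lambda l r) : rat :=
  \sum_(i < l) hval (lam.1 i) - \sum_(j < r) hval (lam.2 j).

Definition starL {l r : nat} (lam1 lam2 lam : Lambda l r) : bool :=
  [forall i, star (lam1.1 i) (lam2.1 i) (lam.1 i)] &&
  [forall j, star (lam1.2 j) (lam2.2 j) (lam.2 j)].

Definition AL {l r : nat} (l0 l1 l2 l3 lam : Lambda l r) : bool :=
  [forall i, Amem (l0.1 i) (l1.1 i) (l2.1 i) (l3.1 i) (lam.1 i)] &&
  [forall j, Amem (l0.2 j) (l1.2 j) (l2.2 j) (l3.2 j) (lam.2 j)].

Definition BL (R : realType) {l r : nat} (lam lam' l0 l1 l2 l3 : Lambda l r) : R[i] :=
  (\prod_(i < l) Bfun R (lam.1 i) (lam'.1 i) (l0.1 i) (l1.1 i) (l2.1 i) (l3.1 i)) *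
  (\prod_(j < r) ((Bfun R (lam.2 j) (lam'.2 j) (l0.2 j) (l1.2 j) (l2.2 j) (l3.2 j))^*)%C).

Section Framed.
Variables (R : realType) (l r : nat) (V : vectType R[i]).
Variables (Sg : Lambda l r -> {vspace V}) (mul : V -> V -> V) (one : V).

Definition grcomp (lam : Lambda l r) (v : V) : V :=
  daddv_pi (Sg lam) (\sum_(mu | mu != lam) Sg mu)%VS v.

Definition graded : Prop :=
  (\sum_(lam : Lambda l r) Sg lam)%VS = fullv /\
  directv (\sum_(lam : Lambda l r) Sg lam).

Definition bilinear_mul : Prop :=
  (forall (k : R[i]) a b c, mul (k *: a + b) c = k *: mul a c + mul b c) /\
  (forall (k : R[i]) a b c, mul a (k *: b + c) = k *: mul a b + mul a c).

Definition FA1 : Prop :=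
  forall lam, sL lam \isn't a Num.int -> Sg lam = 0%VS.

Definition FA2 : Prop :=
  [/\ one != 0, Sg lam0 = <[one]>%VS & forall a, mul one a = a /\ mul a one = a].

Definition FA3 : Prop :=
  forall l1 l2 a b, a \in Sg l1 -> b \in Sg l2 ->
    mul a b \in (\sum_(lam | starL l1 l2 lam) Sg lam)%VS.

Definition FA4 : Prop :=
  forall l0 l1 l2 l3 lam' a1 a2 a3,
    a1 \in Sg l1 -> a2 \in Sg l2 -> a3 \in Sg l3 -> AL l0 l2 l1 l3 lam' ->
    grcomp l0 (mul a2 (grcomp lam' (mul a1 a3))) =
    \sum_(lam | AL l0 l1 l2 l3 lam)
       BL R lam lam' l0 l1 l2 l3 *: grcomp l0 (mul a1 (grcomp lam (mul a2 a3))).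

Definition framed_algebra : Prop :=
  [/\ graded, bilinear_mul, FA1, FA2 & FA3 /\ FA4].

Definition is_ideal (M : {vspace V}) : Prop :=
  M = (\sum_(lam : Lambda l r) (M :&: Sg lam))%VS /\
  (forall a m, m \in M -> mul a m \in M).

Definition simple_framed : Prop :=
  forall M, is_ideal M -> M = 0%VS \/ M = fullv.
End Framed.

(* Codewords: Z_2^(l+r), identified with pairs of boolean functions    *)
Definition Code (l r : nat) := ({ffun 'I_l -> bool} * {ffun 'I_r -> bool})%type.

Definition code0 {l r : nat} : Code l r := ([ffun => false], [ffun => false]).

Definition code_add {l r : nat} (a b : Code l r) : Code l r :=
  ([ffun i => a.1 i (+) b.1 i], [ffun j => a.2 j (+) b.2 j]).

Definition code_mul {l r : nat} (a b : Code l r) : Code l r :=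
  ([ffun i => a.1 i && b.1 i], [ffun j => a.2 j && b.2 j]).

Definition wt {l r : nat} (a : Code l r) : int :=
  (\sum_(i < l) nat_of_bool (a.1 i))%:Z - (\sum_(j < r) nat_of_bool (a.2 j))%:Z.

(* (0,alpha) as an element of IS^(l,r): 1 <-> 1/2, 0 <-> 0 *)
Definition lamc {l r : nat} (a : Code l r) : Lambda l r :=
  ([ffun i => if a.1 i then Hhalf else H0], [ffun j => if a.2 j then Hhalf else H0]).

Definition CS (R : realType) (l r : nat) (V : vectType R[i])
  (Sg : Lambda l r -> {vspace V}) : {set Code l r} :=
  [set a | Sg (lamc a) != 0%VS].

Definition AS0 (R : realType) (l r : nat) (V : vectType R[i])
  (Sg : Lambda l r -> {vspace V}) : {vspace V} :=
  (\sum_(a in CS Sg) Sg (lamc a))%VS.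

(* The twisted group algebra C[hat C_S], realised inside the functions *)
(* Code -> C as the span of the e_alpha (alpha in C_S), with product   *)
(* e_alpha e_beta = eps(alpha,beta) e_(alpha+beta).                    *)
Definition ebas (R : realType) {l r : nat} (a : Code l r) : {ffun Code l r -> R[i]} :=
  [ffun g => (g == a)%:R].

Definition tmul (R : realType) {l r : nat} (eps : Code l r -> Code l r -> R[i])
  (f g : {ffun Code l r -> R[i]}) : {ffun Code l r -> R[i]} :=
  [ffun c => \sum_(a : Code l r) \sum_(b : Code l r)
                 if code_add a b == c then eps a b * f a * g b else 0].

Definition graded_alg_iso (R : realType) (l r : nat) (V : vectType R[i])
  (Sg : Lambda l r -> {vspace V}) (mul : V -> V -> V) (one : V)
  (eps : Code l r -> Code l r -> R[i]) (phi : V -> {ffun Code l r -> R[i]}) : Prop :=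
  (forall (k : R[i]) a b, a \in AS0 Sg -> b \in AS0 Sg ->
         phi (k *: a + b) = k *: phi a + phi b) /\
      (forall a, a \in AS0 Sg -> phi a = 0 -> a = 0) /\
      (forall f : {ffun Code l r -> R[i]},
         (forall c, c \notin CS Sg -> f c = 0) -> exists2 a, a \in AS0 Sg & phi a = f) /\
      (forall a b, a \in AS0 Sg -> b \in AS0 Sg -> phi (mul a b) = tmul eps (phi a) (phi b)) /\
      phi one = ebas R code0 /\
      (forall c a, c \in CS Sg -> a \in Sg (lamc c) -> exists k : R[i], phi a = k *: ebas R c).

(* Left multiplication by a nonzero u in S_(0,a) only shifts degrees, and FA4 makes its kernel
   an ideal, so by simplicity it is injective. Hence every S_(0,a) is zero or a line, C_S is a
   group, and basis vectors x_a (with x_0 = 1) multiply as x_a x_b = c(a,b) x_(a+b). FA4 applied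
   to three basis vectors gives c(a,c) c(b,a+c) = (-1)^|ab| c(b,c) c(a,b+c): c twists exactly
   like eps, so d = c eps is a symmetric normalised 2-cocycle on the elementary abelian 2-group
   C_S. Over C such a cocycle is a coboundary, t(a+b) = d(a,b) t(a) t(b) (extend t one generator
   g at a time, using a square root of 1/d(g,g)), and the rescaled basis y_a = t(a) x_a
   multiplies as y_a y_b = eps(a,b) y_(a+b). *)

From HB Require Import structures.
From mathcomp Require Import all_boot all_order all_algebra.
From mathcomp Require Import reals trigo.
From mathcomp.real_closed Require Import complex.
From mathcomp Require Import ring.
Import Order.TTheory GRing.Theory Num.Theory.
Local Open Scope ring_scope.
Set Implicit Arguments.
Unset Strict Implicit.

Local Notation "a +c b" := (code_add a b) (at level 50, left associativity).

Section Codes.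
Variables l r : nat.
Implicit Types a b c : Code l r.

Lemma code_addC a b : a +c b = b +c a.
Proof. by congr pair; apply/ffunP => i; rewrite !ffunE addbC. Qed.

Lemma code_addA a b c : a +c (b +c c) = a +c b +c c.
Proof. by congr pair; apply/ffunP => i; rewrite !ffunE addbA. Qed.

Lemma code_add0 a : code0 +c a = a.
Proof. by case: a => a1 a2; congr pair; apply/ffunP => i; rewrite !ffunE. Qed.

Lemma code_addr0 a : a +c code0 = a.
Proof. by rewrite code_addC code_add0. Qed.

Lemma code_addK a : a +c a = code0.
Proof. by congr pair; apply/ffunP => i; rewrite !ffunE addbb. Qed.

Lemma code_addKl a b : a +c (a +c b) = b.
Proof. by rewrite code_addA code_addK code_add0. Qed.

Lemma code_addCA a b c : a +c (b +c c) = b +c (a +c c).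
Proof. by rewrite !code_addA [a +c b]code_addC. Qed.

Lemma code_addACA a b c : a +c b +c (a +c c) = b +c c.
Proof. by rewrite code_addA [a +c b +c a]code_addC code_addKl. Qed.

Definition code_group (H : {set Code l r}) : Prop :=
  code0 \in H /\ forall a b, a \in H -> b \in H -> a +c b \in H.

End Codes.

Section SymmetricCocycle.
Variables (K : numClosedFieldType) (l r : nat) (G : {set Code l r}).
Variable d : Code l r -> Code l r -> K.
Implicit Types a b c g h : Code l r.
Hypothesis G_group : code_group G.
Hypothesis d_neq0 : forall a b, a \in G -> b \in G -> d a b != 0.
Hypothesis dC : forall a b, a \in G -> b \in G -> d a b = d b a.
Hypothesis d0l : forall a, a \in G -> d code0 a = 1.
Hypothesis d_cocycle : forall a b c, a \in G -> b \in G -> c \in G ->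
  d a b * d (a +c b) c = d b c * d a (b +c c).

Definition coboundary_on (H : {set Code l r}) : Prop :=
  exists t : Code l r -> K, [/\ t code0 = 1, forall a, a \in H -> t a != 0 &
    forall a b, a \in H -> b \in H -> t (a +c b) = d a b * t a * t b].

Lemma cocycle_swap g a h : g \in G -> a \in G -> h \in G ->
  d g (a +c h) * d a h = d a (g +c h) * d g h.
Proof.
move=> Gg Ga Gh; have [_ GD] := G_group.
have := d_cocycle Ga Gh Gg.
rewrite [d (a +c h) g]dC ?GD // [d h g]dC // [h +c g]code_addC => E.
by rewrite mulrC E mulrC.
Qed.

Lemma cocycle_translate g h h' : g \in G -> h \in G -> h' \in G ->
  d h h' * d g g = d (g +c h) (g +c h') * d g h * d g h'.
Proof.
move=> Gg Gh Gh'; have [_ GD] := G_group.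
have E1 := d_cocycle Gg Gh (GD _ _ Gg Gh').
have E2 := d_cocycle Gg Gg (GD _ _ Gh Gh').
have E3 := d_cocycle Gh Gg Gh'.
have E4 := d_cocycle Gg Gh Gh'.
rewrite code_addK d0l ?GD // mulr1 in E2.
rewrite code_addCA in E1.
rewrite E2 [d (g +c h) (g +c h') * d g h]mulrC E1 mulrAC [d h (g +c h') * _]mulrC -E3.
by rewrite [d h g]dC // [h +c g]code_addC E4 mulrA.
Qed.

Definition adjoin g (H : {set Code l r}) : {set Code l r} :=
  [set a | (a \in H) || (g +c a \in H)].

Lemma code_group_adjoin g H : code_group H -> code_group (adjoin g H).
Proof.
move=> [H0 HD]; split; first by rewrite inE H0.
move=> a b; rewrite !inE => /orP[Ha|Ha] /orP[Hb|Hb].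
- by rewrite (HD a b).
- by rewrite code_addCA (HD a (g +c b)) ?orbT.
- by rewrite code_addA (HD (g +c a) b) ?orbT.
- by rewrite -(code_addACA g a b) (HD (g +c a) (g +c b)).
Qed.

Section Adjoin.
Variables (H : {set Code l r}) (g : Code l r) (t : Code l r -> K).
Hypotheses (sHG : {subset H <= G}) (H_group : code_group H).
Hypotheses (Gg : g \in G) (gNH : g \notin H).
Hypotheses (t0 : t code0 = 1) (t_neq0 : forall a, a \in H -> t a != 0).
Hypothesis tD : forall a b, a \in H -> b \in H -> t (a +c b) = d a b * t a * t b.

(* The value on the new generator is a square root of 1/d(g,g), forced by t(g+g) = t(0) = 1. *)
Let s := (sqrtC (d g g))^-1.

Definition adjoin_fun a := if a \in H then t a else d g (g +c a) * s * t (g +c a).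

Lemma coset_notin h : h \in H -> g +c h \notin H.
Proof.
move=> Hh; apply: contra gNH => Hgh; have [_ HD] := H_group.
by rewrite -(code_addKl h g) [h +c g]code_addC (HD h (g +c h)).
Qed.

Lemma adjoin_fun_coset h : h \in H -> adjoin_fun (g +c h) = d g h * s * t h.
Proof. by move=> Hh; rewrite /adjoin_fun (negPf (coset_notin Hh)) code_addKl. Qed.

Lemma adjoin_fun_mixed a h : a \in H -> h \in H ->
  adjoin_fun (a +c (g +c h)) = d a (g +c h) * adjoin_fun a * adjoin_fun (g +c h).
Proof.
move=> Ha Hh; have [_ HD] := H_group.
rewrite (code_addCA a g h) !adjoin_fun_coset ?HD // /adjoin_fun Ha tD //.
have := cocycle_swap Gg (sHG Ha) (sHG Hh) => E.
transitivity ((d g (a +c h) * d a h) * (s * t a * t h)); first by ring.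
by rewrite E; ring.
Qed.

Lemma adjoin_fun_cosets h h' : h \in H -> h' \in H ->
  adjoin_fun (g +c h +c (g +c h')) =
  d (g +c h) (g +c h') * adjoin_fun (g +c h) * adjoin_fun (g +c h').
Proof.
move=> Hh Hh'; have [_ HD] := H_group.
have s2 : s * s * d g g = 1.
  by rewrite /s -invfM -expr2 sqrtCK mulVf ?d_neq0.
rewrite code_addACA !adjoin_fun_coset // /adjoin_fun HD // tD //.
have := cocycle_translate Gg (sHG Hh) (sHG Hh') => E.
transitivity (d h h' * d g g * (s * s) * t h * t h').
  by rewrite -[in LHS](mulr1 (d h h')) -s2; ring.
by rewrite E; ring.
Qed.

Lemma coboundary_on_adjoin : coboundary_on (adjoin g H).
Proof.
have [H0 HD] := H_group.
have s_neq0 : s != 0 by rewrite invr_eq0 sqrtC_eq0 d_neq0.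
have in_coset a : g +c a \in H -> exists2 h, h \in H & a = g +c h.
  by move=> Hga; exists (g +c a); rewrite ?code_addKl.
exists adjoin_fun; split.
- by rewrite /adjoin_fun H0.
- move=> a; rewrite /adjoin inE /adjoin_fun; case: ifP => [Ha _|_ /= Hga]; first exact: t_neq0.
  by rewrite !mulf_neq0 ?(d_neq0 Gg (sHG Hga)) ?(t_neq0 Hga).
move=> a b; rewrite /adjoin !inE => /orP[Ha|/in_coset[h Hh ->]] /orP[Hb|/in_coset[h' Hh' ->]].
- by rewrite /adjoin_fun Ha Hb HD // tD.
- exact: adjoin_fun_mixed.
- have Ggh : g +c h \in G by apply: (proj2 G_group) => //; apply: sHG.
  by rewrite (code_addC _ b) adjoin_fun_mixed // dC ?(sHG Hb) // mulrAC.
- exact: adjoin_fun_cosets.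
Qed.

End Adjoin.

Lemma cocycle_coboundary : coboundary_on G.
Proof.
have [G0 GD] := G_group.
suff grow H : code_group H -> {subset H <= G} -> coboundary_on H -> coboundary_on G.
  apply: (grow [set code0]).
  - by split=> [|a b]; rewrite !inE // => /eqP-> /eqP->; rewrite code_add0.
  - by move=> a; rewrite inE => /eqP->.
  exists (fun=> 1); split=> // [a _|a b]; first exact: oner_neq0.
  by rewrite !inE => /eqP-> /eqP->; rewrite d0l ?mulr1.
have [n] := ubnP #|G :\: H|; elim: n H => // n IH H ltGHn H_group sHG [t [t0 t_neq0 tD]].
have [sGH|/subsetPn[g Gg gNH]] := boolP (G \subset H).
  by exists t; split=> // [a /(subsetP sGH)|a b /(subsetP sGH) Ha /(subsetP sGH)]; auto.
apply: (IH (adjoin g H)).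
- have ltGHg : G :\: adjoin g H \proper G :\: H.
    apply/properP; split.
      by apply/subsetP => x; rewrite /adjoin !inE negb_or => /andP[/andP[-> _] ->].
    by exists g; rewrite /adjoin !inE ?gNH ?Gg // code_addK (proj1 H_group) orbT.
  exact: leq_trans (proper_card ltGHg) ltGHn.
- exact: code_group_adjoin.
- move=> a; rewrite /adjoin inE => /orP[/sHG //|/sHG Gga].
  by rewrite -(code_addKl g a) GD.
- exact: (coboundary_on_adjoin sHG H_group Gg gNH t0 t_neq0 tD).
Qed.

End SymmetricCocycle.

(* [shiftL a lam] is the unique element of the fusion product (0,a) * lam: fusion with 1/2
   exchanges 0 and 1/2 and fixes 1/16. *)
Definition shiftIS (b : bool) (h : IS) : IS :=
  if b then match h with H0 => Hhalf | Hhalf => H0 | H16 => H16 end else h.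

Definition shiftL {l r : nat} (a : Code l r) (lam : Lambda l r) : Lambda l r :=
  ([ffun i => shiftIS (a.1 i) (lam.1 i)], [ffun j => shiftIS (a.2 j) (lam.2 j)]).

Lemma star_shiftIS b h h0 : star (if b then Hhalf else H0) h h0 = (h0 == shiftIS b h).
Proof. by case: b; case: h; case: h0. Qed.

Lemma shiftIS_half x y :
  shiftIS x (if y then Hhalf else H0) = if x (+) y then Hhalf else H0.
Proof. by case: x; case: y. Qed.

Lemma shiftISK x : involutive (shiftIS x).
Proof. by case: x => //; case. Qed.

Lemma Bfun_half (R : realType) (b b' a a' : IS) x y :
  Bfun R b b' a (if x then Hhalf else H0) (if y then Hhalf else H0) a' = (-1) ^+ (x && y).
Proof. by case: x; case: y; rewrite /= ?expr1 ?expr0. Qed.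

Section FusionWithCodes.
Variables l r : nat.
Implicit Types (a b c : Code l r) (lam mu : Lambda l r).

Lemma starL_lamc a lam mu : starL (lamc a) lam mu = (mu == shiftL a lam).
Proof.
case: mu => m1 m2; rewrite /starL xpair_eqE.
apply/andP/andP => [[/forallP E1 /forallP E2]|[/eqP-> /eqP->]].
  by split; apply/eqP/ffunP => i; rewrite ffunE;
    [move: (E1 i) | move: (E2 i)]; rewrite /= ffunE star_shiftIS => /eqP.
by split; apply/forallP => i; rewrite /= !ffunE star_shiftIS.
Qed.

Lemma AL_lamc l0 a l2 l3 lam :
  AL l0 (lamc a) l2 l3 lam = starL l2 l3 lam && (l0 == shiftL a lam).
Proof.
rewrite /AL /Amem -starL_lamc /starL.
apply/andP/andP => [[/forallP A1 /forallP A2]|[/andP[/forallP S1 /forallP S2]]].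
  split; apply/andP; split; apply/forallP => i.
  - by case/andP: (A1 i).
  - by case/andP: (A2 i).
  - by case/andP: (A1 i).
  - by case/andP: (A2 i).
by move=> /andP[/forallP T1 /forallP T2]; split; apply/forallP => i; rewrite ?S1 ?T1 ?S2 ?T2.
Qed.

Lemma lamc_add a b : lamc (a +c b) = shiftL a (lamc b).
Proof. by congr pair; apply/ffunP => i; rewrite !ffunE shiftIS_half. Qed.

Lemma shiftLK a : involutive (shiftL a).
Proof. by case=> m1 m2; congr pair; apply/ffunP => i; rewrite !ffunE shiftISK. Qed.

Lemma shiftL_inj a : injective (shiftL a).
Proof. exact: inv_inj (shiftLK a). Qed.

Lemma shiftLC a b lam : shiftL a (shiftL b lam) = shiftL b (shiftL a lam).
Proof.
congr pair; apply/ffunP => i; rewrite !ffunE.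
  by case: (a.1 i); case: (b.1 i); case: (lam.1 i).
by case: (a.2 i); case: (b.2 i); case: (lam.2 i).
Qed.

Lemma lamc_inj : injective (@lamc l r).
Proof.
case=> a1 a2 [b1 b2] [/ffunP E1 /ffunP E2]; congr pair; apply/ffunP => i.
  by move: (E1 i); rewrite !ffunE; case: (a1 i); case: (b1 i).
by move: (E2 i); rewrite !ffunE; case: (a2 i); case: (b2 i).
Qed.

Lemma lamc0 : lamc (@code0 l r) = lam0.
Proof. by congr pair; apply/ffunP => i; rewrite !ffunE. Qed.

Lemma BL_lamc (R : realType) lam lam' l0 a b l3 :
  BL R lam lam' l0 (lamc a) (lamc b) l3 = (-1) ^ wt (code_mul a b).
Proof.
rewrite /BL /wt.
under eq_bigr do rewrite !ffunE Bfun_half.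
under [X in _ * X]eq_bigr do rewrite !ffunE Bfun_half rmorphXn rmorphN1.
rewrite !prodrXr.
under [X in _ = _ ^ (X%:Z - _)]eq_bigr do rewrite ffunE.
under [X in _ = _ ^ (_ - X%:Z)]eq_bigr do rewrite ffunE.
by rewrite expfzDr ?oppr_eq0 ?oner_eq0 // -exprz_inv invrN1.
Qed.

End FusionWithCodes.

Section Coefficient.
Variables (K : fieldType) (vT : vectType K).

Definition coef (x v : vT) : K := coord [tuple x] 0 v.
HB.instance Definition _ x := GRing.Linear.copy (coef x) (coord [tuple x] 0).

Lemma coefK x v : v \in <[x]>%VS -> coef x v *: x = v.
Proof.
by rewrite -span_seq1 => /coord_span {2}->; rewrite big_ord1.
Qed.

Lemma coefZ x k : x != 0 -> coef x (k *: x) = k.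
Proof.
move=> x_neq0; rewrite /coef linearZ /= (coord_free 0 0) ?eqxx ?mulr1 //.
by rewrite /= seq1_free.
Qed.

Lemma scalerIv (x : vT) (k1 k2 : K) : x != 0 -> k1 *: x = k2 *: x -> k1 = k2.
Proof. by move=> x_neq0 E; rewrite -(coefZ k1 x_neq0) E coefZ. Qed.

End Coefficient.

Section FramedAlgebra.
Variables (R : realType) (l r : nat) (V : vectType R[i]).
Variables (Sg : Lambda l r -> {vspace V}) (mul : V -> V -> V) (one : V).
Hypothesis Sg_sum : (\sum_(lam : Lambda l r) Sg lam)%VS = fullv.
Hypothesis Sg_direct : directv (\sum_(lam : Lambda l r) Sg lam).
Hypothesis mulDl : forall (k : R[i]) a b c, mul (k *: a + b) c = k *: mul a c + mul b c.
Hypothesis mulDr : forall (k : R[i]) a b c, mul a (k *: b + c) = k *: mul a b + mul a c.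
Hypothesis one_neq0 : one != 0.
Hypothesis Sg_lam0 : Sg lam0 = <[one]>%VS.
Hypothesis mul_unit : forall a, mul one a = a /\ mul a one = a.
Hypothesis mul_fusion : FA3 Sg mul.
Hypothesis mul_braiding : FA4 Sg mul.
Hypothesis S_simple : simple_framed Sg mul.

Local Notation gr := (grcomp Sg).
Local Notation CS := (CS Sg).
Implicit Types (a b c g : Code l r) (lam mu : Lambda l r).

Definition lmul (u : V) := mul u.
Definition rmul (w : V) := fun u => mul u w.

Lemma lmul_is_linear u : linear (lmul u).
Proof. by move=> k v w; rewrite /lmul mulDr. Qed.
Lemma rmul_is_linear w : linear (rmul w).
Proof. by move=> k u v; rewrite /rmul mulDl. Qed.
HB.instance Definition _ u := GRing.isLinear.Build _ V V *:%R (lmul u) (lmul_is_linear u).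
HB.instance Definition _ w := GRing.isLinear.Build _ V V *:%R (rmul w) (rmul_is_linear w).

Lemma mulv_sum u (I : Type) (s : seq I) (P : pred I) (F : I -> V) :
  mul u (\sum_(i <- s | P i) F i) = \sum_(i <- s | P i) mul u (F i).
Proof. exact: (linear_sum (lmul u)). Qed.
Lemma mul_sumv w (I : Type) (s : seq I) (P : pred I) (F : I -> V) :
  mul (\sum_(i <- s | P i) F i) w = \sum_(i <- s | P i) mul (F i) w.
Proof. exact: (linear_sum (rmul w)). Qed.
Lemma mulv0 u : mul u 0 = 0. Proof. exact: (linear0 (lmul u)). Qed.
Lemma mulvZ u k v : mul u (k *: v) = k *: mul u v. Proof. exact: (linearZ_LR (lmul u)). Qed.
Lemma mulZv k u v : mul (k *: u) v = k *: mul u v. Proof. exact: (linearZ_LR (rmul v)). Qed.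
Lemma mulvB u v w : mul u (v - w) = mul u v - mul u w. Proof. exact: (linearB (lmul u)). Qed.

Lemma grcomp_is_linear lam : linear (gr lam).
Proof. by move=> k u v; rewrite /grcomp linearP. Qed.
HB.instance Definition _ lam :=
  GRing.isLinear.Build _ V V *:%R (gr lam) (grcomp_is_linear lam).

Lemma Sg_capv_sum lam : (Sg lam :&: \sum_(mu | mu != lam) Sg mu = 0)%VS.
Proof. exact: (directv_sumP Sg_direct). Qed.

Lemma grcomp_mem lam v : gr lam v \in Sg lam.
Proof. exact: memv_pi. Qed.

Lemma grcomp_id lam v : v \in Sg lam -> gr lam v = v.
Proof. by move=> Hv; rewrite /grcomp daddv_pi_id // Sg_capv_sum. Qed.

Lemma grcomp_out lam mu v : v \in Sg mu -> mu != lam -> gr lam v = 0.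
Proof.
move=> Hv nml; set W := (\sum_(mu | mu != lam) Sg mu)%VS.
have HW : v \in W by apply: (subvP (sumv_sup mu nml (subvv _))).
have := daddv_pi_add (Sg_capv_sum lam) (subvP (addvSr _ _) _ HW).
rewrite (daddv_pi_id _ HW); last by rewrite capvC Sg_capv_sum.
by move/(canRL (addrK v)); rewrite subrr.
Qed.

Lemma grcomp_sum_homog (I : finType) (f : I -> Lambda l r) (P : pred I) (vs : I -> V) i0 :
  injective f -> (forall i, P i -> vs i \in Sg (f i)) ->
  gr (f i0) (\sum_(i | P i) vs i) = if P i0 then vs i0 else 0.
Proof.
move=> f_inj Hvs; rewrite linear_sum.
case: ifP => Pi0.
  rewrite (bigD1 i0) //= grcomp_id ?Hvs // big1 ?addr0 // => i /andP[Pi ni].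
  by apply: (grcomp_out (Hvs _ Pi)); apply: contra ni => /eqP /f_inj ->.
apply: big1 => i Pi; apply: (grcomp_out (Hvs _ Pi)).
by apply: contraFN Pi0 => /eqP /f_inj <-.
Qed.

Lemma grcomp_decomp v : v = \sum_lam gr lam v.
Proof.
have : v \in (\sum_lam Sg lam)%VS by rewrite Sg_sum memvf.
case/memv_sumP => vs Hvs Ev.
have E lam : gr lam v = vs lam by rewrite Ev (grcomp_sum_homog (f := id)).
by under eq_bigr do rewrite E.
Qed.

Lemma grcomp_sum_out (P : pred (Lambda l r)) lam v :
  v \in (\sum_(mu | P mu) Sg mu)%VS -> ~~ P lam -> gr lam v = 0.
Proof.
case/memv_sumP => vs Hvs -> nP.
by rewrite (grcomp_sum_homog (f := id)) // (negPf nP).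
Qed.

Lemma mul_shiftL a lam u v :
  u \in Sg (lamc a) -> v \in Sg lam -> mul u v \in Sg (shiftL a lam).
Proof.
move=> Hu Hv; have := mul_fusion Hu Hv.
by rewrite (big_pred1 (shiftL a lam)) // => mu; rewrite starL_lamc.
Qed.

Definition kerL (u : V) : {vspace V} := lker (linfun (lmul u)).

Lemma memv_kerL u v : (v \in kerL u) = (mul u v == 0).
Proof. by rewrite memv_ker lfunE. Qed.

Lemma kerL_grcomp a u v lam :
  u \in Sg (lamc a) -> mul u v = 0 -> mul u (gr lam v) = 0.
Proof.
move=> Hu uv0.
have := grcomp_sum_homog (P := predT) (vs := fun mu => mul u (gr mu v)) lam (@shiftL_inj l r a).
rewrite -mulv_sum -grcomp_decomp uv0 linear0 /= => <- // mu _.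
exact: mul_shiftL (grcomp_mem _ _).
Qed.

(* FA4 with a1 = w and a2 = u expresses each homogeneous part of u (w m) through
   w (u m) = 0. *)
Lemma kerL_mul a u w m l1 l3 : u \in Sg (lamc a) -> w \in Sg l1 -> m \in Sg l3 ->
  mul u m = 0 -> mul u (mul w m) = 0.
Proof.
move=> Hu Hw Hm um0.
rewrite [mul w m]grcomp_decomp mulv_sum big1 // => mu _.
have [w_mu|Nw_mu] := boolP (starL l1 l3 mu); last first.
  by rewrite (grcomp_sum_out (mul_fusion Hw Hm) Nw_mu) mulv0.
have AL_mu : AL (shiftL a mu) (lamc a) l1 l3 mu by rewrite AL_lamc w_mu eqxx.
have := mul_braiding Hw Hu Hm AL_mu.
rewrite grcomp_id; last exact: mul_shiftL (grcomp_mem _ _).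
move=> ->; apply: big1 => lam _.
by rewrite um0 linear0 mulv0 linear0 scaler0.
Qed.

Lemma kerL_ideal a u : u \in Sg (lamc a) -> is_ideal Sg mul (kerL u).
Proof.
move=> Hu; split.
  apply/eqP; rewrite eqEsubv; apply/andP; split.
    apply/subvP => v; rewrite memv_kerL => /eqP uv0.
    rewrite [v]grcomp_decomp; apply: memv_sumr => lam _.
    by rewrite memv_cap grcomp_mem memv_kerL (kerL_grcomp lam Hu uv0) eqxx.
  by apply/subv_sumP => lam _; apply: capvSl.
move=> w m; rewrite !memv_kerL => /eqP um0; apply/eqP.
rewrite [w]grcomp_decomp mul_sumv mulv_sum big1 // => l1 _.
rewrite [m]grcomp_decomp !mulv_sum big1 // => l3 _.
exact: kerL_mul Hu (grcomp_mem _ _) (grcomp_mem _ _) (kerL_grcomp _ Hu um0).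
Qed.

Lemma mul_homog_eq0 a u v : u \in Sg (lamc a) -> u != 0 -> mul u v = 0 -> v = 0.
Proof.
move=> Hu u_neq0 uv0.
have [ker0|kerT] := S_simple (kerL_ideal Hu).
  by apply/eqP; rewrite -memv0 -ker0 memv_kerL uv0.
by move: (memvf one); rewrite -kerT memv_kerL (proj2 (mul_unit u)) (negPf u_neq0).
Qed.

(* [mul x v] and [mul x x] lie in S_(0,0) = <[one]>, so [x] kills a combination of [v] and [x]. *)
Lemma Sg_line a x : x \in Sg (lamc a) -> x != 0 -> Sg (lamc a) = <[x]>%VS.
Proof.
move=> Hx x_neq0; apply/eqP; rewrite eq_sym eqEsubv -memvE Hx /=.
apply/subvP => v Hv.
have S0 u w : u \in Sg (lamc a) -> w \in Sg (lamc a) -> exists k, mul u w = k *: one.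
  move=> Hu Hw; apply/vlineP; rewrite -Sg_lam0 -lamc0 -(code_addK a) lamc_add.
  exact: mul_shiftL.
have [s xv] := S0 _ _ Hx Hv; have [t xx] := S0 _ _ Hx Hx.
have t_neq0 : t != 0.
  apply: contraNneq (x_neq0) => t0; apply/eqP/(mul_homog_eq0 Hx x_neq0).
  by rewrite xx t0 scale0r.
have : mul x (t *: v - s *: x) = 0.
  by rewrite mulvB !mulvZ xv xx !scalerA mulrC subrr.
move/(mul_homog_eq0 Hx x_neq0)/eqP; rewrite subr_eq0 => /eqP tv.
by apply/vlineP; exists (s / t); apply: (scalerI t_neq0); rewrite tv scalerA mulrC divfK.
Qed.

Lemma memCS a v : v \in Sg (lamc a) -> v != 0 -> a \in CS.
Proof.
by move=> Hv v_neq0; rewrite inE; apply: contraNneq v_neq0 => Sa0; rewrite -memv0 -Sa0.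
Qed.

Definition xb a : V := if a == code0 then one else vpick (Sg (lamc a)).

Lemma xb_mem a : xb a \in Sg (lamc a).
Proof.
rewrite /xb; case: eqP => [->|_]; last exact: memv_pick.
by rewrite lamc0 Sg_lam0 memv_line.
Qed.

Lemma xb_neq0 a : a \in CS -> xb a != 0.
Proof. by rewrite inE /xb; case: (a =P code0) => // _; rewrite vpick0. Qed.

Lemma xb0 : xb code0 = one.
Proof. by rewrite /xb eqxx. Qed.

Lemma CS_group : code_group CS.
Proof.
have CS0 : code0 \in CS by rewrite (memCS (xb_mem code0)) ?xb0.
split=> // a b Ca Cb; apply: (@memCS _ (mul (xb a) (xb b))).
  by rewrite lamc_add mul_shiftL ?xb_mem.
by apply: contraNneq (xb_neq0 Cb) => /(mul_homog_eq0 (xb_mem a) (xb_neq0 Ca)) ->.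
Qed.

Lemma code0_CS : code0 \in CS. Proof. by case: CS_group. Qed.
Lemma CS_add a b : a \in CS -> b \in CS -> a +c b \in CS.
Proof. by case: CS_group => _; apply. Qed.

Lemma Sg_xb a : a \in CS -> Sg (lamc a) = <[xb a]>%VS.
Proof. by move=> Ca; rewrite (Sg_line (xb_mem a)) ?xb_neq0. Qed.

Lemma mul_homog_braiding a b lam u w v :
  u \in Sg (lamc a) -> w \in Sg (lamc b) -> v \in Sg lam ->
  mul w (mul u v) = (-1) ^ wt (code_mul a b) *: mul u (mul w v).
Proof.
move=> Hu Hw Hv.
have uv_mem : mul u v \in Sg (shiftL a lam) by exact: mul_shiftL.
have wv_mem : mul w v \in Sg (shiftL b lam) by exact: mul_shiftL.
have AL_uv : AL (shiftL b (shiftL a lam)) (lamc b) (lamc a) lam (shiftL a lam).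
  by rewrite AL_lamc starL_lamc !eqxx.
have := mul_braiding Hu Hw Hv AL_uv.
rewrite (grcomp_id uv_mem) grcomp_id ?mul_shiftL // => ->.
rewrite (big_pred1 (shiftL b lam)); last first.
  by move=> mu; rewrite AL_lamc starL_lamc shiftLC (inj_eq (@shiftL_inj _ _ a)) eq_sym andbb.
by rewrite BL_lamc (grcomp_id wv_mem) grcomp_id // shiftLC mul_shiftL.
Qed.

Definition cc a b : R[i] := coef (xb (a +c b)) (mul (xb a) (xb b)).

Lemma mul_xb a b : a \in CS -> b \in CS -> mul (xb a) (xb b) = cc a b *: xb (a +c b).
Proof.
by move=> Ca Cb; rewrite coefK // -Sg_xb ?CS_add // lamc_add mul_shiftL ?xb_mem.
Qed.

Lemma cc_neq0 a b : a \in CS -> b \in CS -> cc a b != 0.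
Proof.
move=> Ca Cb; apply: contraNneq (xb_neq0 Cb) => cc0.
by apply/eqP/(mul_homog_eq0 (xb_mem a) (xb_neq0 Ca)); rewrite mul_xb // cc0 scale0r.
Qed.

Lemma cc0l a : a \in CS -> cc code0 a = 1.
Proof.
by move=> Ca; rewrite /cc code_add0 xb0 (proj1 (mul_unit _)) -[X in coef _ X]scale1r coefZ ?xb_neq0.
Qed.

Lemma cc0r a : a \in CS -> cc a code0 = 1.
Proof.
by move=> Ca; rewrite /cc code_addr0 xb0 (proj2 (mul_unit _)) -[X in coef _ X]scale1r coefZ ?xb_neq0.
Qed.

Lemma cc_twist a b c : a \in CS -> b \in CS -> c \in CS ->
  cc a c * cc b (a +c c) = (-1) ^ wt (code_mul a b) * cc b c * cc a (b +c c).
Proof.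
move=> Ca Cb Cc; have Cac := CS_add Ca Cc; have Cbc := CS_add Cb Cc.
have := mul_homog_braiding (xb_mem a) (xb_mem b) (xb_mem c).
rewrite !mul_xb // !mulvZ !mul_xb // !scalerA (code_addCA b a c).
by move/(scalerIv (xb_neq0 (CS_add Ca Cbc))).
Qed.

Variable eps : Code l r -> Code l r -> R[i].
Hypothesis eps_sign : forall a b, a \in CS -> b \in CS -> eps a b = 1 \/ eps a b = -1.
Hypothesis eps_bimul : forall a b c, a \in CS -> b \in CS -> c \in CS ->
  eps (a +c b) c = eps a c * eps b c /\ eps a (b +c c) = eps a b * eps a c.
Hypothesis eps_comm : forall a b, a \in CS -> b \in CS ->
  eps a b * eps b a = (-1) ^ wt (code_mul a b).

Lemma eps0l a : a \in CS -> eps code0 a = 1.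
Proof.
move=> Ca; have := proj1 (eps_bimul code0_CS code0_CS Ca); rewrite code_add0.
case: (eps_sign code0_CS Ca) => -> //; rewrite mulrNN mulr1 => /eqP.
by rewrite eq_sym -addr_eq0 -mulr2n mulrn_eq0 oner_eq0.
Qed.

(* [dd] is symmetric because [cc] and [eps] have the same commutator [(-1)^|ab|]. *)
Definition dd a b : R[i] := cc a b * eps a b.

Lemma dd_neq0 a b : a \in CS -> b \in CS -> dd a b != 0.
Proof.
move=> Ca Cb; rewrite mulf_neq0 ?cc_neq0 //.
by case: (eps_sign Ca Cb) => ->; rewrite ?oppr_eq0 oner_eq0.
Qed.

Lemma dd0l a : a \in CS -> dd code0 a = 1.
Proof. by move=> Ca; rewrite /dd cc0l // eps0l // mulr1. Qed.

Lemma ddC a b : a \in CS -> b \in CS -> dd a b = dd b a.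
Proof.
move=> Ca Cb; have := cc_twist Ca Cb code0_CS.
rewrite !code_addr0 !cc0r // mul1r mulr1 -eps_comm // /dd => ->.
by case: (eps_sign Cb Ca) => ->; ring.
Qed.

Lemma dd_twist a b c : a \in CS -> b \in CS -> c \in CS ->
  dd a c * dd b (a +c c) = dd b c * dd a (b +c c).
Proof.
move=> Ca Cb Cc; have := cc_twist Ca Cb Cc.
rewrite /dd (proj2 (eps_bimul Cb Ca Cc)) (proj2 (eps_bimul Ca Cb Cc)) -eps_comm // => E.
transitivity (cc a c * cc b (a +c c) * eps b a * eps b c * eps a c); first by ring.
by rewrite E; case: (eps_sign Cb Ca) => ->; ring.
Qed.

Lemma dd_cocycle a b c : a \in CS -> b \in CS -> c \in CS ->
  dd a b * dd (a +c b) c = dd b c * dd a (b +c c).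
Proof.
move=> Ca Cb Cc; have := dd_twist Ca Cc Cb.
by rewrite [dd c (a +c b)]ddC ?CS_add // [dd c b]ddC // [c +c b]code_addC.
Qed.

Section Rescaled.
Variable t : Code l r -> R[i].
Hypotheses (t0 : t code0 = 1) (t_neq0 : forall a, a \in CS -> t a != 0).
Hypothesis tD : forall a b, a \in CS -> b \in CS -> t (a +c b) = dd a b * t a * t b.

Definition yb a : V := t a *: xb a.

Lemma yb_mem a : yb a \in Sg (lamc a).
Proof. by rewrite memvZ ?xb_mem. Qed.

Lemma yb_neq0 a : a \in CS -> yb a != 0.
Proof. by move=> Ca; rewrite scaler_eq0 negb_or t_neq0 ?xb_neq0. Qed.

Lemma yb0 : yb code0 = one.
Proof. by rewrite /yb t0 scale1r xb0. Qed.

Lemma Sg_yb a : a \in CS -> Sg (lamc a) = <[yb a]>%VS.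
Proof. by move=> Ca; rewrite (Sg_line (yb_mem a)) ?yb_neq0. Qed.

Lemma mul_yb a b : a \in CS -> b \in CS -> mul (yb a) (yb b) = eps a b *: yb (a +c b).
Proof.
move=> Ca Cb; rewrite /yb mulZv mulvZ mul_xb // tD // !scalerA /dd; congr (_ *: _).
by case: (eps_sign Ca Cb) => ->; ring.
Qed.

Lemma ffunZE (T : finType) (k : R[i]) (f : {ffun T -> R[i]}) x : (k *: f) x = k * f x.
Proof. by rewrite ffunE. Qed.

Definition phi (v : V) : {ffun Code l r -> R[i]} :=
  [ffun g => if g \in CS then coef (yb g) (gr (lamc g) v) else 0].

Lemma phi_is_linear : linear phi.
Proof.
move=> k u v; apply/ffunP => g; rewrite !ffunE.
by case: ifP => _; rewrite ?linearP // scaler0 addr0.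
Qed.
HB.instance Definition _ := GRing.isLinear.Build _ V _ *:%R phi phi_is_linear.

Lemma phi_out g v : g \notin CS -> phi v g = 0.
Proof. by move=> NCg; rewrite ffunE (negPf NCg). Qed.

Lemma phi_yb a : a \in CS -> phi (yb a) = ebas R a.
Proof.
move=> Ca; apply/ffunP => g; rewrite !ffunE.
have [->|nga] := eqVneq g a.
  by rewrite Ca grcomp_id ?yb_mem // -[X in coef _ X]scale1r coefZ ?yb_neq0.
case: ifP => // _; rewrite (grcomp_out (yb_mem a)) ?linear0 //.
by apply: contra nga => /eqP/lamc_inj->.
Qed.

Lemma AS0_decomp v : v \in AS0 Sg -> v = \sum_a phi v a *: yb a.
Proof.
case/memv_sumP => vs Hvs ->; rewrite [LHS]big_mkcond; apply: eq_bigr => a _.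
case: ifP => [Ca|/negbT NCa]; last by rewrite phi_out // scale0r.
rewrite ffunE Ca (grcomp_sum_homog (f := lamc)) ?Ca //; last exact: lamc_inj.
by rewrite coefK // -Sg_yb ?Hvs.
Qed.

Lemma phi_mul_yb a b c : a \in CS -> b \in CS ->
  phi (mul (yb a) (yb b)) c = if a +c b == c then eps a b else 0.
Proof.
move=> Ca Cb; rewrite mul_yb // linearZ /= phi_yb ?CS_add // ffunZE ffunE eq_sym.
by case: eqP; rewrite ?mulr1 ?mulr0.
Qed.

Lemma phi_mul u v : u \in AS0 Sg -> v \in AS0 Sg ->
  phi (mul u v) = tmul eps (phi u) (phi v).
Proof.
move=> Hu Hv; apply/ffunP => c.
rewrite {1}(AS0_decomp Hu) {1}(AS0_decomp Hv) [RHS]ffunE.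
rewrite mul_sumv linear_sum sum_ffunE; apply: eq_bigr => a _.
rewrite mulZv linearZ /= ffunZE mulv_sum linear_sum sum_ffunE mulr_sumr.
apply: eq_bigr => b _; rewrite mulvZ linearZ /= ffunZE.
have [Ca|NCa] := boolP (a \in CS); last first.
  by rewrite (phi_out u NCa) mul0r; case: ifP; rewrite ?mulr0 ?mul0r.
have [Cb|NCb] := boolP (b \in CS); last first.
  by rewrite (phi_out v NCb) mul0r !mulr0; case: ifP.
by rewrite phi_mul_yb //; case: eqP => _; rewrite ?mulr0 //; ring.
Qed.

Lemma phi_surj (f : {ffun Code l r -> R[i]}) :
  (forall c, c \notin CS -> f c = 0) -> exists2 v, v \in AS0 Sg & phi v = f.
Proof.
move=> f_out; exists (\sum_(a in CS) f a *: yb a).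
  by apply: memv_sumr => a Ca; rewrite memvZ ?yb_mem.
apply/ffunP => g; have [Cg|NCg] := boolP (g \in CS); last by rewrite phi_out ?f_out.
rewrite linear_sum sum_ffunE (bigD1 g) //= big1 ?addr0 => [|a /andP[Ca nag]].
  by rewrite linearZ /= phi_yb // ffunZE ffunE eqxx mulr1.
by rewrite linearZ /= phi_yb // ffunZE ffunE eq_sym (negPf nag) mulr0.
Qed.

Lemma AS0_graded_iso : graded_alg_iso Sg mul one eps phi.
Proof.
split; first by move=> k u v _ _; rewrite linearP.
split.
  move=> v Hv phi_v0; rewrite (AS0_decomp Hv) phi_v0 big1 // => a _.
  by rewrite ffunE scale0r.
split; first exact: phi_surj.
split; first exact: phi_mul.
split; first by rewrite -yb0 phi_yb // code0_CS.
move=> c v Cc; rewrite Sg_yb // => /vlineP[k ->].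
by exists k; rewrite linearZ /= phi_yb.
Qed.

End Rescaled.

Theorem AS0_twisted_group_algebra :
  code_group CS /\ exists phi, graded_alg_iso Sg mul one eps phi.
Proof.
split; first exact: CS_group.
have [t [t0 t_neq0 tD]] :=
  cocycle_coboundary CS_group dd_neq0 ddC dd0l dd_cocycle.
by exists (phi t); apply: AS0_graded_iso.
Qed.

End FramedAlgebra.

Theorem mainTheorem8 (R : realType) (l r : nat) (V : vectType R[i])
  (Sg : Lambda l r -> {vspace V}) (mul : V -> V -> V) (one : V)
  (eps : Code l r -> Code l r -> R[i]) :
  framed_algebra Sg mul one ->
  simple_framed Sg mul ->
  (forall a b, a \in CS Sg -> b \in CS Sg -> eps a b = 1 \/ eps a b = -1) ->
  (forall a b c, a \in CS Sg -> b \in CS Sg -> c \in CS Sg ->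
     eps (code_add a b) c = eps a c * eps b c /\ eps a (code_add b c) = eps a b * eps a c) ->
  (forall a, a \in CS Sg -> eps a a = (-1) ^ (wt a %/ 2)%Z) ->
  (forall a b, a \in CS Sg -> b \in CS Sg -> eps a b * eps b a = (-1) ^ (wt (code_mul a b))) ->
  (code0 \in CS Sg /\ forall a b, a \in CS Sg -> b \in CS Sg -> code_add a b \in CS Sg) /\
  exists phi : V -> {ffun Code l r -> R[i]}, graded_alg_iso Sg mul one eps phi.
Proof.
move=> [[Sg_sum Sg_direct] [mulDl mulDr] _ [one_neq0 Sg_lam0 mul_unit] [fusion braiding]].
move=> S_simple eps_sign eps_bimul _ eps_comm.
exact: AS0_twisted_group_algebra.
Qed.
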